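(* For every sequence of digits in $D$ and every $n\ge1$: (1) $p_n/q_n$ lies between $p_n'/q_n'$ and $p_n''/q_n''$; (2) $p_{n-1}/q_{n-1}$ does not lie between $p_n'/q_n'$ and $p_n''/q_n''$; (3) the three numbers $p_n/q_n$, $p_n'/q_n'$, $p_n''/q_n''$ are distinct and all lie in the half-open interval $I_{n-1}$ with endpoints $p_{n-1}/q_{n-1}$ and $p_{n-1}''/q_{n-1}''$ that contains $p_{n-1}''/q_{n-1}''$ but not $p_{n-1}/q_{n-1}$.
   Context: Admissible digits: $D=\{(1,1)\}\cup\{(a,\varepsilon): a\in\mathbb Z,\ a\ge2,\ \varepsilon\in\{-1,1\}\}$. Fix digits $(a_1,\varepsilon_1),(a_2,\varepsilon_2),\dots\in D$. For $n\ge1$, with $M=\begin{pmatrix}1&-1\\1&0\end{pmatrix}$, $J=\begin{pmatrix}2&-1\\1&0\end{pmatrix}$, $E(a,\varepsilon)=\begin{pmatrix}a&\varepsilon\\1&0\end{pmatrix}$, define integers by $M E(a_1,\varepsilon_1) J\cdots J E(a_n,\varepsilon_n) J=\begin{pmatrix}p_n&-p_n'\\ q_n&-q_n'\end{pmatrix}$ and $\begin{pmatrix}p_n''\\ q_n''\end{pmatrix}=M E(a_1,\varepsilon_1) J\cdots J E(a_n,\varepsilon_n)\begin{pmatrix}1\\1\end{pmatrix}$; set $p_0=q_0=1$, $p_0''=0$, $q_0''=1$. Then $p_n/q_n$, $p_n'/q_n'$, $p_n''/q_n''$ equal the finite continued fraction $1-\cfrac{1}{a_1+\cfrac{\varepsilon_1}{2-\cfrac{1}{\ddots\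 \cfrac{\varepsilon_{n-1}}{2-\cfrac{1}{c}}}}}$ with last term $c=a_n+\varepsilon_n/2$, $c=a_n$, $c=a_n+\varepsilon_n$ respectively (principal, sub-, pseudo-convergents); all $q$'s are positive. *)

From HB Require Import structures.
From mathcomp Require Import all_boot all_order all_algebra.
Set Implicit Arguments. Unset Strict Implicit. Unset Printing Implicit Defensive.
Import Order.TTheory GRing.Theory Num.Theory.
Local Open Scope ring_scope.

Definition mx2 (a b c d : int) : 'M[int]_2 :=
  \matrix_(i < 2, j < 2)
    if (i : nat) == 0%N then (if (j : nat) == 0%N then a else b)
    else (if (j : nat) == 0%N then c else d).

Definition Mmx : 'M[int]_2 := mx2 1 (-1) 1 0.
Definition Jmx : 'M[int]_2 := mx2 2 (-1) 1 0.
Definition Emx (a e : int) : 'M[int]_2 := mx2 a e 1 0.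

Definition admissible (a e : int) : Prop :=
  (a = 1 /\ e = 1) \/ (2 <= a /\ (e = 1 \/ e = -1)).

(* digits are given by a : nat -> int and e : nat -> int, digit k = (a k, e k)
   for k >= 1 (the value at index 0 is irrelevant). *)

Fixpoint prodJ (a e : nat -> int) (n : nat) : 'M[int]_2 :=
  match n with
  | 0%N => Mmx
  | m.+1 => prodJ a e m *m Emx (a m.+1) (e m.+1) *m Jmx
  end.

Definition i0 : 'I_2 := ord0.
Definition i1 : 'I_2 := ord_max.

(* principal convergent numerators/denominators (p_0 = q_0 = 1) *)
Definition pP (a e : nat -> int) n : int := prodJ a e n i0 i0.
Definition qP (a e : nat -> int) n : int := prodJ a e n i1 i0.
(* sub-convergents, n >= 1 *)
Definition pS (a e : nat -> int) n : int := - prodJ a e n i0 i1.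
Definition qS (a e : nat -> int) n : int := - prodJ a e n i1 i1.
(* pseudo-convergents: M E1 J ... J En (1,1)^T for n >= 1; p''_0 = 0, q''_0 = 1 *)
Definition pseudoMx (a e : nat -> int) n : 'M[int]_2 :=
  match n with
  | 0%N => mx2 0 0 1 0
  | m.+1 => prodJ a e m *m Emx (a m.+1) (e m.+1)
  end.
Definition pPs (a e : nat -> int) n : int :=
  pseudoMx a e n i0 i0 + pseudoMx a e n i0 i1.
Definition qPs (a e : nat -> int) n : int :=
  pseudoMx a e n i1 i0 + pseudoMx a e n i1 i1.

Definition cP a e n : rat := (pP a e n)%:~R / (qP a e n)%:~R.
Definition cS a e n : rat := (pS a e n)%:~R / (qS a e n)%:~R.
Definition cPs a e n : rat := (pPs a e n)%:~R / (qPs a e n)%:~R.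

Definition between (x y z : rat) : bool :=
  (Num.min y z < x) && (x < Num.max y z).

Definition in_halfopen (x y z : rat) : bool :=
  [&& Num.min x y <= z, z <= Num.max x y & z != x].

(* Write P_n, S_n, W_n for the principal, sub- and pseudo-convergent vectors
   (numerator, denominator).  One step of the matrix product gives
   S_{n+1} = (a-1) P_n + W_n,  W_{n+1} = (a+e-1) P_n + W_n,  P_{n+1} = S_{n+1} + W_{n+1}.
   For admissible digits the coefficients are nonnegative and the denominators
   stay positive, so p'_{n+1}/q'_{n+1} and p''_{n+1}/q''_{n+1} are weighted averages
   of p_n/q_n and p''_n/q''_n with positive weight on the latter: they lie in I_n.
   The principal convergent is their mediant, hence strictly between them, and
   det(S_{n+1}, W_{n+1}) = -e det(P_n, W_n) never vanishes, so no two of these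
   fractions coincide. *)

From mathcomp Require Import all_boot all_order all_algebra.
From mathcomp Require Import ring lra zify.
Set Implicit Arguments.
Unset Strict Implicit.
Unset Printing Implicit Defensive.

Import Order.TTheory GRing.Theory Num.Theory.
Local Open Scope ring_scope.

Lemma between_wavg (x w S T : rat) : 0 < S -> 0 < T -> x != w ->
  between ((S * x + T * w) / (S + T)) x w.
Proof.
move=> S_gt0 T_gt0 xw; set z := _ / _.
have zE : z * (S + T) = S * x + T * w by rewrite divfK // gt_eqF ?addr_gt0.
rewrite /between gt_min lt_max.
case: (ltgtP x w) xw => [x_lt_w | w_lt_x | ->]; rewrite ?eqxx // => _.
  have [xz zw] : x < z /\ z < w by split; nra.
  by rewrite xz zw orbT.
have [wz zx] : w < z /\ z < x by split; nra.
by rewrite wz zx orbT.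
Qed.

Lemma in_halfopen_endpoint (x w : rat) : x != w -> in_halfopen x w w.
Proof. by move=> xw; rewrite /in_halfopen ge_min le_max lexx !orbT eq_sym. Qed.

Lemma between_in_halfopen (x w z : rat) : between z x w -> in_halfopen x w z.
Proof.
rewrite /between /in_halfopen => /andP[lo hi]; rewrite ltW // ltW //=.
apply/eqP=> zx; move: lo hi; rewrite zx gt_min lt_max ltxx /= => w_lt_x x_lt_w; lra.
Qed.

Lemma wavg_in_halfopen (x w S T : rat) : 0 <= S -> 0 < T -> x != w ->
  in_halfopen x w ((S * x + T * w) / (S + T)).
Proof.
rewrite le_eqVlt => /predU1P[<- | S_gt0] T_gt0 xw.
  by rewrite mul0r !add0r [T * w]mulrC mulfK ?gt_eqF // in_halfopen_endpoint.
exact/between_in_halfopen/between_wavg.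
Qed.

Lemma in_halfopen_convex (x w y z u : rat) :
  in_halfopen x w y -> in_halfopen x w z -> between u y z -> in_halfopen x w u.
Proof.
rewrite /in_halfopen /between !ge_min !le_max gt_min lt_max !neq_lt.
move=> /and3P[y1 y2 yx] /and3P[z1 z2 zx] /andP[u1 u2].
apply/and3P; split; lra.
Qed.

Lemma in_halfopen_not_between (x w y z : rat) :
  in_halfopen x w y -> in_halfopen x w z -> ~~ between x y z.
Proof.
rewrite /in_halfopen /between !ge_min !le_max gt_min lt_max !neq_lt.
move=> /and3P[y1 y2 yx] /and3P[z1 z2 zx]; apply/negP => /andP[x1 x2]; lra.
Qed.

Lemma between_neq (x y z : rat) : between x y z -> [/\ x != y, x != z & y != z].
Proof.
rewrite /between gt_min lt_max !neq_lt => /andP[lo hi]; split; lra.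
Qed.

Definition frac (x y : int) : rat := x%:~R / y%:~R.
Definition cross (p1 q1 p2 q2 : int) : int := p1 * q2 - p2 * q1.

Lemma cross_addl p1 q1 p2 q2 : cross (p1 + p2) (q1 + q2) p2 q2 = cross p1 q1 p2 q2.
Proof. by rewrite /cross; ring. Qed.

Lemma cross_shift s u p1 q1 p2 q2 :
  cross (s * p1 + p2) (s * q1 + q2) (u * p1 + p2) (u * q1 + q2) = (s - u) * cross p1 q1 p2 q2.
Proof. by rewrite /cross; ring. Qed.

Lemma frac_eq p1 q1 p2 q2 : q1 != 0 -> q2 != 0 ->
  (frac p1 q1 == frac p2 q2) = (cross p1 q1 p2 q2 == 0).
Proof. by move=> q1N0 q2N0; rewrite eqr_div ?intr_eq0 // -!intrM eqr_int subr_eq0. Qed.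

Lemma frac_wavg s t p1 q1 p2 q2 : q1 != 0 -> q2 != 0 -> s * q1 + t * q2 != 0 ->
  frac (s * p1 + t * p2) (s * q1 + t * q2) =
  ((s * q1)%:~R * frac p1 q1 + (t * q2)%:~R * frac p2 q2) / ((s * q1)%:~R + (t * q2)%:~R).
Proof.
move=> q1N0 q2N0 qN0; rewrite /frac -intrD !intrD !intrM.
field; rewrite -!intrM -intrD !intr_eq0 q1N0 q2N0 qN0 //.
Qed.

Lemma frac_neq (p1 q1 p2 q2 : int) : 0 < q1 -> 0 < q2 -> cross p1 q1 p2 q2 != 0 ->
  frac p1 q1 != frac p2 q2.
Proof. by move=> q1_gt0 q2_gt0; rewrite frac_eq // lt0r_neq0. Qed.

Lemma frac_mediant_between (p1 q1 p2 q2 : int) : 0 < q1 -> 0 < q2 -> cross p1 q1 p2 q2 != 0 ->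
  between (frac (p1 + p2) (q1 + q2)) (frac p1 q1) (frac p2 q2).
Proof.
move=> q1_gt0 q2_gt0 crossN0; have q_gt0 : 0 < q1 + q2 by rewrite addr_gt0.
have := @frac_wavg 1 1 p1 q1 p2 q2; rewrite !mul1r => -> //; try exact: lt0r_neq0.
by apply: between_wavg; rewrite ?ltr0z //; apply: frac_neq.
Qed.

Lemma frac_shift_in_halfopen (s p1 q1 p2 q2 : int) : 0 < q1 -> 0 < q2 -> 0 <= s ->
  cross p1 q1 p2 q2 != 0 -> in_halfopen (frac p1 q1) (frac p2 q2) (frac (s * p1 + p2) (s * q1 + q2)).
Proof.
move=> q1_gt0 q2_gt0 s_ge0 crossN0; have q_gt0 : 0 < s * q1 + q2 by nia.
have := @frac_wavg s 1 p1 q1 p2 q2; rewrite !mul1r => -> //; try exact: lt0r_neq0.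
apply: wavg_in_halfopen; last exact: frac_neq.
  by rewrite ler0z mulr_ge0 // ltW.
by rewrite ltr0z.
Qed.

Lemma mulmx2E (R : pzRingType) (A B : 'M[R]_2) i j :
  (A *m B) i j = A i i0 * B i0 j + A i i1 * B i1 j.
Proof.
rewrite !mxE !big_ord_recl big_ord0 addr0.
by congr (_ + A i _ * B _ j); apply: val_inj.
Qed.

Section Convergents.

Variables a e : nat -> int.

(* Row [i0] of a convergent vector holds numerators, row [i1] denominators. *)
Definition principal m i : int := prodJ a e m i i0.
Definition subconv m i : int := - prodJ a e m i i1.
Definition pseudo m i : int := pseudoMx a e m i i0 + pseudoMx a e m i i1.

Lemma pseudoE m i : pseudo m i = principal m i - subconv m i.
Proof.
rewrite /pseudo /principal /subconv opprK; case: m => [|m] /=.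
  by case: i => [[|[|//]] ?]; rewrite !mxE.
rewrite !mulmx2E !mxE /=; ring.
Qed.

Lemma subconv_succ m i :
  subconv m.+1 i = (a m.+1 - 1) * principal m i + pseudo m i.
Proof. rewrite pseudoE /subconv /principal /= !mulmx2E !mxE /=; ring. Qed.

Lemma pseudo_succ m i :
  pseudo m.+1 i = (a m.+1 + e m.+1 - 1) * principal m i + pseudo m i.
Proof. rewrite [LHS]pseudoE pseudoE /subconv /principal /= !mulmx2E !mxE /=; ring. Qed.

Lemma principal_succ m i : principal m.+1 i = subconv m.+1 i + pseudo m.+1 i.
Proof. by rewrite pseudoE addrC subrK. Qed.

Lemma cPE k : cP a e k = frac (principal k i0) (principal k i1). Proof. by []. Qed.
Lemma cSE k : cS a e k = frac (subconv k i0) (subconv k i1). Proof. by []. Qed.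
Lemma cPsE k : cPs a e k = frac (pseudo k i0) (pseudo k i1). Proof. by []. Qed.

Hypothesis digits_admissible : forall k, (1 <= k)%N -> admissible (a k) (e k).

Lemma digit_bounds m : [/\ 0 <= a m.+1 - 1, 0 <= a m.+1 + e m.+1 - 1 & e m.+1 != 0].
Proof. by case: (@digits_admissible m.+1 isT) => [[-> ->] | [? [-> | ->]]]; split; lia. Qed.

Lemma subconv_pseudo_succ m : 0 < principal m i1 -> 0 < pseudo m i1 ->
  cross (principal m i0) (principal m i1) (pseudo m i0) (pseudo m i1) != 0 ->
  [/\ 0 < subconv m.+1 i1, 0 < pseudo m.+1 i1
    & cross (subconv m.+1 i0) (subconv m.+1 i1) (pseudo m.+1 i0) (pseudo m.+1 i1) != 0].
Proof.
move=> q_gt0 qw_gt0 crossN0; have [s_ge0 u_ge0 eN0] := digit_bounds m.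
rewrite !subconv_succ !pseudo_succ cross_shift; split; [nia | nia |].
by rewrite mulf_neq0 // (_ : _ - _ = - e m.+1) ?oppr_eq0 //; ring.
Qed.

Lemma convergents_invariant m :
  [/\ 0 < principal m i1, 0 < pseudo m i1
    & cross (principal m i0) (principal m i1) (pseudo m i0) (pseudo m i1) != 0].
Proof.
elim: m => [|m [q_gt0 qw_gt0 crossN0]]; first by rewrite /principal /pseudo /= !mxE.
have [qs_gt0 qw'_gt0 cross'N0] := subconv_pseudo_succ q_gt0 qw_gt0 crossN0.
by rewrite !principal_succ cross_addl addr_gt0.
Qed.

End Convergents.

Theorem lemma3p6 (a e : nat -> int)
  (hD : forall k : nat, (1 <= k)%N -> admissible (a k) (e k))
  (n : nat) (hn : (1 <= n)%N) :
  between (cP a e n) (cS a e n) (cPs a e n)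
  /\ ~~ between (cP a e n.-1) (cS a e n) (cPs a e n)
  /\ [/\ cP a e n != cS a e n, cP a e n != cPs a e n & cS a e n != cPs a e n]
  /\ [/\ in_halfopen (cP a e n.-1) (cPs a e n.-1) (cP a e n),
         in_halfopen (cP a e n.-1) (cPs a e n.-1) (cS a e n)
       & in_halfopen (cP a e n.-1) (cPs a e n.-1) (cPs a e n)].
Proof.
case: n hn => // m _ /=.
have [q_gt0 qw_gt0 crossN0] := convergents_invariant hD m.
have [qs_gt0 qw'_gt0 cross'N0] := subconv_pseudo_succ hD q_gt0 qw_gt0 crossN0.
have [s_ge0 u_ge0 _] := digit_bounds hD m.
have S_in : in_halfopen (cP a e m) (cPs a e m) (cS a e m.+1).
  by rewrite cPE cPsE cSE !subconv_succ frac_shift_in_halfopen.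
have W_in : in_halfopen (cP a e m) (cPs a e m) (cPs a e m.+1).
  by rewrite cPE !cPsE !pseudo_succ frac_shift_in_halfopen.
have P_between : between (cP a e m.+1) (cS a e m.+1) (cPs a e m.+1).
  by rewrite cPE cSE cPsE !principal_succ frac_mediant_between.
have [PS PW SW] := between_neq P_between.
do !split=> //; last exact: in_halfopen_convex P_between.
exact: in_halfopen_not_between S_in W_in.
Qed.
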